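(* Let $k\ge2$, $n=2^k-1$, and let $C$ be the binary simplex $(n,k)$ code. Then every erasure pattern with at most $\frac{n-1}{2}$ erasures allows for parallel easy repair.
   Context: The binary simplex $(n,k)$ code, $n=2^k-1$, has generator matrix $G\in\mathbb F_2^{k\times n}$ whose columns $g_1,\dots,g_n$ are all the distinct nonzero vectors of $\mathbb F_2^k$; its minimum distance is $2^{k-1}$. Nodes are the coordinates $c_1,\dots,c_n$ of codewords $c=uG$. An erasure pattern is a set $S^e\subseteq\{1,\dots,n\}$ of erased nodes; the other nodes are live. A node $c_i$ is related to distinct nodes $c_{j_1},\dots,c_{j_\gamma}$ (all different from $c_i$) if $g_i=g_{j_1}+\dots+g_{j_\gamma}$. An erased node allows for $r$-repair if it is related to $\gamma\le r$ nodes which are all live; easy repair means $2$-repair (so $\gamma\in\{1,2\}$). An erasure pattern allows for parallel easy repair if each of its erased nodes allows for easy repair with respect to the original set of live nodes. *)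

From mathcomp Require Import all_boot all_algebra.
Set Implicit Arguments. Unset Strict Implicit. Unset Printing Implicit Defensive.
Import GRing.Theory.
Local Open Scope ring_scope.

(* A binary linear code given by a generator matrix G : 'M['F_2]_(k, n);
   node i is the coordinate c_i, with generator column g_i = col i G. *)

(* Binary simplex generator matrix: the columns are pairwise distinct and
   nonzero (with n = 2^k - 1 columns, they are then all nonzero vectors). *)
Definition simplex_generator (k n : nat) (G : 'M['F_2]_(k, n)) : Prop :=
  n = (2 ^ k - 1)%N /\
  (forall j : 'I_n, col j G != 0) /\
  injective (fun j : 'I_n => col j G).

Definition related (k n : nat) (G : 'M['F_2]_(k, n)) (i : 'I_n) (J : {set 'I_n}) :
  Prop := i \notin J /\ col i G = \sum_(j in J) col j G.

Definition allows_repair (k n : nat) (G : 'M['F_2]_(k, n)) (S : {set 'I_n})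
  (r : nat) (i : 'I_n) : Prop :=
  exists J : {set 'I_n},
    [/\ (1 <= #|J| <= r)%N, [disjoint J & S] & related G i J].

Definition allows_easy_repair (k n : nat) (G : 'M['F_2]_(k, n)) (S : {set 'I_n})
  (i : 'I_n) : Prop := allows_repair G S 2 i.

(* parallel easy repair: every erased node allows easy repair w.r.t. the
   original set of live nodes (the complement of S) *)
Definition parallel_easy_repair (k n : nat) (G : 'M['F_2]_(k, n))
  (S : {set 'I_n}) : Prop :=
  forall i : 'I_n, i \in S -> allows_easy_repair G S i.

From mathcomp Require Import all_boot all_algebra.
From mathcomp Require Import zify.
Import GRing.Theory.

Set Implicit Arguments.
Unset Strict Implicit.

(* The columns of G are exactly the nonzero vectors,
   so every node j <> i has a partner j' <> i, j with g_i = g_j + g_j', and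
   j |-> j' is an involution on the n - 1 nodes other than i.  If every such
   pair {j, j'} met an erased node, the at most (n - 1)/2 - 1 erased nodes
   other than i would, together with their partners, cover all n - 1 nodes
   other than i, which is impossible.  So some pair is entirely live and
   repairs i. *)

Local Open Scope ring_scope.

Lemma addmx_F2_self {m p : nat} (v : 'M['F_2]_(m, p)) : v + v = 0.
Proof. by apply/matrixP => a b; rewrite !mxE addrr_pchar2 ?pchar_Fp. Qed.

Lemma addmx_F2_eq0 {m p : nat} (v w : 'M['F_2]_(m, p)) :
  (v + w == 0) = (v == w).
Proof. by rewrite -(addmx_F2_self w) (inj_eq (addIr w)). Qed.

Lemma leq_card_setU_imset {T : finType} (A : {set T}) (f : T -> T) :
  (#|A :|: f @: A| <= #|A|.*2)%N.
Proof.
apply: leq_trans (leq_card_setU _ _) _.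
by rewrite -addnn leq_add2l leq_imset_card.
Qed.

Section SimplexPartner.

Context {k n : nat} {G : 'M['F_2]_(k, n)}.
Hypothesis n_simplex : n = (2 ^ k - 1)%N.
Hypothesis col_neq0 : forall j : 'I_n, col j G != 0.
Hypothesis col_inj : injective (fun j : 'I_n => col j G).

Lemma simplex_col_onto (v : 'cV['F_2]_k) : v != 0 -> exists j, col j G = v.
Proof.
move=> v_neq0.
have cols : [set col j G | j : 'I_n] = [set~ 0].
  apply/eqP; rewrite eqEcard; apply/andP; split.
    by apply/subsetP => _ /imsetP [j _ ->]; rewrite !inE col_neq0.
  by rewrite cardsC1 card_mx card_Fp // card_imset // card_ord muln1 n_simplex subn1.
have : v \in [set~ 0] by rewrite !inE.
by rewrite -cols => /imsetP [j _ ->]; exists j.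
Qed.

Context {i : 'I_n}.

Definition partner (j : 'I_n) : 'I_n :=
  odflt i [pick j' | col j' G == col i G + col j G].

Lemma col_partner j : j != i -> col (partner j) G = col i G + col j G.
Proof.
move=> ji; rewrite /partner; case: pickP => [j' /eqP // | no_j'].
have : col i G + col j G != 0.
  by rewrite addmx_F2_eq0; apply: contra ji => /eqP /col_inj ->.
by case/simplex_col_onto => j' col_j'; move: (no_j' j'); rewrite col_j' eqxx.
Qed.

Lemma partner_neq_i j : j != i -> partner j != i.
Proof.
move=> ji; apply/eqP => pj_i; move: (col_partner ji).
rewrite pj_i => /eqP; rewrite -{1}[col i G]addr0 (inj_eq (addrI _)) eq_sym.
by rewrite (negbTE (col_neq0 j)).
Qed.

Lemma partner_neq j : j != i -> partner j != j.
Proof.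
move=> ji; apply/eqP => pj_j; move: (col_partner ji).
rewrite pj_j => /eqP; rewrite -{1}[col j G]add0r (inj_eq (addIr _)) eq_sym.
by rewrite (negbTE (col_neq0 i)).
Qed.

Lemma partnerK j : j != i -> partner (partner j) = j.
Proof.
move=> ji; apply: col_inj => /=.
by rewrite !col_partner ?partner_neq_i // addrA addmx_F2_self add0r.
Qed.

Lemma easy_repair_of_live_pair (S : {set 'I_n}) j :
  j != i -> j \notin S -> partner j \notin S -> allows_easy_repair G S i.
Proof.
move=> ji jS pjS; exists [set j; partner j]; split.
- by rewrite cards2 eq_sym partner_neq.
- by rewrite disjoints_subset; apply/subsetP => x; rewrite !inE => /orP [] /eqP ->.
- split; first by rewrite !inE negb_or eq_sym ji eq_sym partner_neq_i.
  rewrite big_setU1 ?inE 1?eq_sym ?partner_neq //= big_set1 col_partner //.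
  by rewrite addrCA addmx_F2_self addr0.
Qed.

Lemma exists_live_pair (S : {set 'I_n}) :
  i \in S -> (#|S| <= (n - 1) %/ 2)%N ->
  exists j, [&& j != i, j \notin S & partner j \notin S].
Proof.
move=> iS small_S; apply/existsP; apply: contraLR small_S => /existsPn no_pair.
pose A := S :\ i.
have cover : [set~ i] \subset A :|: partner @: A.
  apply/subsetP => j; rewrite !inE => ji; move: (no_pair j); rewrite ji /=.
  case: (boolP (j \in S)) => [// | _ /negbNE pjS] /=.
  apply/imsetP; exists (partner j); last by rewrite partnerK.
  by rewrite !inE partner_neq_i.
have := leq_trans (subset_leq_card cover) (leq_card_setU_imset A partner).
rewrite /A cardsC1 card_ord (cardsD1 i S) iS add1n -ltnNge -mul2n -subn1.
set s := #|S :\ i|.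
lia.
Qed.

End SimplexPartner.

Theorem theorem3p1 (k n : nat) (G : 'M['F_2]_(k, n)) :
  (2 <= k)%N -> simplex_generator G ->
  forall S : {set 'I_n}, (#|S| <= (n - 1) %/ 2)%N -> parallel_easy_repair G S.
Proof.
move=> _ [n_simplex [col_neq0 col_inj]] S small_S i iS.
have [j /and3P [ji jS pjS]] := exists_live_pair n_simplex col_neq0 col_inj iS small_S.
exact (easy_repair_of_live_pair n_simplex col_neq0 col_inj ji jS pjS).
Qed.
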